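(* Let $n=2k+1$ with $k\ge 2$. Then $W=\{a_1,a_{k+1}\}$ is a local resolving set of $S_n$.
   Context: For $n\ge 3$, $S_n$ is the graph with vertex set $\{a_i,b_i,c_i,d_i : 1\le i\le n\}$ and edge set $\{a_ia_{i+1}, b_ib_{i+1}, c_ic_{i+1}, d_id_{i+1}, a_{i+1}b_i, a_ib_i, b_ic_i, c_id_i : 1\le i\le n\}$, indices taken modulo $n$. A vertex $w$ resolves $u,v$ if $d(u,w)\neq d(v,w)$ ($d$ the graph distance). A set $W$ is a local resolving set if every two adjacent vertices are resolved by some element of $W$. *)

From mathcomp Require Import all_boot.
Set Implicit Arguments. Unset Strict Implicit. Unset Printing Implicit Defensive.

Section Graph.
Variable T : finType.
Variable e : rel T.

Fixpoint walkn (m : nat) (u v : T) : bool :=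
  if m is m'.+1 then [exists w, e u w && walkn m' w v] else u == v.

(* graph distance: least m with a walk of length m from u to v;
   every shortest path has length < #|T|.  If no walk exists it is #|T|
   (irrelevant here since S_n is connected). *)
Definition gdist (u v : T) : nat := find (fun m => walkn m u v) (iota 0 #|T|).

Definition resolves (w u v : T) : bool := gdist u w != gdist v w.

Definition local_resolving (W : {set T}) : Prop :=
  forall u v : T, e u v -> exists2 w, w \in W & resolves w u v.
End Graph.

(* The graph S_n.  Vertex (l, i) with l : 'I_4 encodes
   l = 0 -> a_{i+1}, l = 1 -> b_{i+1}, l = 2 -> c_{i+1}, l = 3 -> d_{i+1},
   for i : 'I_n (so index i of the paper is i-1 here, modulo n). *)
Definition Svert (n : nat) := ('I_4 * 'I_n)%type.

Definition Sgen (n : nat) (x y : Svert n) : bool :=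
  let: (l, i) := x in let: (l', j) := y in
  (* a_i a_{i+1}, b_i b_{i+1}, c_i c_{i+1}, d_i d_{i+1} *)
  ((l == l') && (j %% n == (i + 1) %% n))
  (* a_{i+1} b_i *)
  || ((l == 0 :> nat) && (l' == 1 :> nat) && (i %% n == (j + 1) %% n))
  (* a_i b_i, b_i c_i, c_i d_i *)
  || ((l' == l.+1 :> nat) && (i == j :> nat)).

Definition Sadj (n : nat) : rel (Svert n) :=
  fun x y => (x != y) && (Sgen x y || Sgen y x).

Definition vA (n : nat) (i : 'I_n) : Svert n := (ord0, i).

From mathcomp Require Import all_boot zify.
Set Implicit Arguments. Unset Strict Implicit. Unset Printing Implicit Defensive.

(* The distance from a_c is explicit: it is the cyclic distance |i - c| on the
   a-cycle, and l + min(|i - c|, |i + 1 - c|) at level l = 1, 2, 3 over index i,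
   since b_i is attached to a_i and a_{i+1} and b_i c_i d_i is a pendant path.  Such a
   formula is certified as the graph distance by checking that it vanishes only
   at a_c, changes by at most 1 along edges, and decreases along some edge away
   from a_c.  For n = 2k + 1 the two explicit distance functions (c = 0, c = k)
   then separate every edge, which is a finite case analysis in linear
   arithmetic. *)

Lemma find_iota (P : pred nat) N a m : m < N -> P (a + m) ->
  (forall j, j < m -> ~~ P (a + j)) -> find P (iota a N) = m.
Proof.
elim: N a m => [|N IH] a m //= ltmN Pm minm.
case: m ltmN Pm minm => [|m] ltmN Pm minm; first by rewrite addn0 in Pm; rewrite Pm.
have := minm 0 isT; rewrite addn0 => /negbTE ->.
congr S; apply: IH => [//||j ltjm]; rewrite addSnnS //; exact: minm.
Qed.

Section DistancePotential.
Variables (T : finType) (e : rel T) (w : T) (f : T -> nat).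
Hypothesis f_eq0 : forall x, f x = 0 <-> x = w.
Hypothesis f_lipschitz : forall x y, e x y -> f x <= (f y).+1.
Hypothesis f_desc : forall x, 0 < f x -> exists y, e x y /\ f y = (f x).-1.
Hypothesis f_lt_card : forall x, f x < #|T|.

Lemma walkn_potential_lb m x : walkn e m x w -> f x <= m.
Proof.
elim: m x => [|m IH] x /=; first by move/eqP => ->; rewrite (proj2 (f_eq0 w)).
case/existsP => y /andP[exy /IH]; have := f_lipschitz exy; lia.
Qed.

Lemma walkn_potential x : walkn e (f x) x w.
Proof.
suff walkn_m m : forall y, f y = m -> walkn e m y w by exact: walkn_m.
elim: m => [|m IH] y fy /=; first by apply/eqP; apply f_eq0.
have [|z [eyz fz]] := f_desc (x := y); first by rewrite fy.
by apply/existsP; exists z; rewrite eyz IH // fz fy.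
Qed.

Lemma gdist_potential x : gdist e x w = f x.
Proof.
apply: find_iota => //; first by rewrite add0n walkn_potential.
by move=> j ltj; apply/negP; rewrite add0n => /walkn_potential_lb; lia.
Qed.

End DistancePotential.

Definition csucc n i := if i.+1 == n then 0 else i.+1.
Definition cpred n i := if i == 0 then n.-1 else i.-1.
Definition cdist n c i := minn ((i - c) + (c - i)) (n - ((i - c) + (c - i))).

Definition adist n c l i :=
  if l == 0 then cdist n c i else l + minn (cdist n c i) (cdist n c (csucc n i)).

Lemma csuccP n i : i < n ->
  (csucc n i = i.+1 /\ i.+1 < n) \/ (csucc n i = 0 /\ i.+1 = n).
Proof. by rewrite /csucc; case: eqP; lia. Qed.

Lemma cpredP n i : i < n ->
  (cpred n i = i.-1 /\ 0 < i) \/ (cpred n i = n.-1 /\ i = 0).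
Proof. by rewrite /cpred; case: eqP; lia. Qed.

Lemma cdistP n c i : i < n -> c < n -> let x := cdist n c i in
  [/\ i = c + x \/ c = i + x \/ i + x = c + n \/ c + x = i + n & 2 * x <= n].
Proof. by move=> ltin ltcn /=; rewrite /cdist; split; lia. Qed.

Lemma csucc_lt n i : i < n -> csucc n i < n.
Proof. by move/csuccP; lia. Qed.

Lemma cpred_lt n i : i < n -> cpred n i < n.
Proof. by move=> ltin; have := cpredP ltin; lia. Qed.

Lemma csucc_neq n i : 1 < n -> i < n -> csucc n i != i.
Proof. by move=> lt1n /csuccP; lia. Qed.

Lemma cpred_neq n i : 1 < n -> i < n -> cpred n i != i.
Proof. by move=> lt1n /cpredP; lia. Qed.

Lemma cpredK n i : i < n -> csucc n (cpred n i) = i.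
Proof. by move=> ltin; case: (cpredP ltin) => -[-> ?]; rewrite /csucc; case: eqP; lia. Qed.

Lemma modn_succ n i : i < n -> (i + 1) %% n = csucc n i.
Proof.
move=> ltin; rewrite /csucc addn1; case: eqP => [->|]; first by rewrite modnn.
by move=> ?; rewrite modn_small //; lia.
Qed.

Lemma cdist_eq0 n c i : i < n -> c < n -> cdist n c i = 0 -> i = c.
Proof. by move=> ltin ltcn; have [] := cdistP ltin ltcn; lia. Qed.

Lemma cdist_csucc n c i : i < n -> c < n ->
  cdist n c (csucc n i) <= (cdist n c i).+1 /\ cdist n c i <= (cdist n c (csucc n i)).+1.
Proof.
move=> ltin ltcn; have := cdistP (csucc_lt ltin) ltcn.
by have := cdistP ltin ltcn; have := csuccP ltin; lia.
Qed.

Lemma cdist_desc n c i : i < n -> c < n -> 0 < cdist n c i ->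
  cdist n c (csucc n i) = (cdist n c i).-1 \/ cdist n c (cpred n i) = (cdist n c i).-1.
Proof.
move=> ltin ltcn; have := cdistP (csucc_lt ltin) ltcn.
have := cdistP (cpred_lt ltin) ltcn; have := cdistP ltin ltcn.
by have := csuccP ltin; have := cpredP ltin; lia.
Qed.

Definition Sedge n l i l' j :=
  ((l == l') && (j == csucc n i)) || ((l == 0) && (l' == 1) && (i == csucc n j))
  || ((l' == l.+1) && (i == j)).

Lemma SgenE n (l l' : 'I_4) (i j : 'I_n) : Sgen (l, i) (l', j) = Sedge n l i l' j.
Proof. by rewrite /Sgen /Sedge !modn_succ // !modn_small // -val_eqE. Qed.

Lemma SadjP n (x y : Svert n) :
  Sadj x y -> Sedge n x.1 x.2 y.1 y.2 \/ Sedge n y.1 y.2 x.1 x.2.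
Proof.
by case: x y => l i [l' j]; rewrite /Sadj => /andP[_ /orP[]]; rewrite !SgenE; [left | right].
Qed.

Lemma Sedge_adj n (l l' : 'I_4) (i j : 'I_n) : (l != l' :> nat) \/ (i != j :> nat) ->
  Sedge n l i l' j || Sedge n l' j l i -> Sadj (l, i) (l', j).
Proof.
move=> neq Elij; rewrite /Sadj !SgenE Elij andbT.
by apply/negP => /eqP[el ei]; subst; case: neq; rewrite eqxx.
Qed.

Lemma adist_lipschitz n c l i l' j : c < n -> i < n -> j < n -> Sedge n l i l' j ->
  adist n c l i <= (adist n c l' j).+1 /\ adist n c l' j <= (adist n c l i).+1.
Proof.
move=> ltcn ltin ltjn.
have := cdist_csucc ltin ltcn; have := cdist_csucc ltjn ltcn.
have := cdist_csucc (csucc_lt ltin) ltcn.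
rewrite /Sedge /adist => ? ? ?.
case/orP => [/orP[] | ] => [/andP[/eqP-> /eqP->] | /andP[/andP[/eqP-> /eqP->] /eqP->] |
  /andP[/eqP-> /eqP->]];
  by case: eqP; try case: eqP; lia.
Qed.

Definition adistS n c (x : Svert n) := adist n c x.1 x.2.

Section DistanceFromA.
Variables (n : nat) (c : 'I_n).
Hypothesis lt1n : 1 < n.

Lemma adistS_eq0 (x : Svert n) : adistS c x = 0 <-> x = vA c.
Proof.
case: x => l i; rewrite /adistS /adist /=; split; last first.
  by case=> -> ->; rewrite /= /cdist subnn; lia.
case: eqP => [l0 d0|]; last lia.
have ic := cdist_eq0 (ltn_ord i) (ltn_ord c) d0.
by congr pair; apply: val_inj; rewrite /= ?l0 ?ic.
Qed.

Lemma adistS_lipschitz (x y : Svert n) : Sadj x y -> adistS c x <= (adistS c y).+1.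
Proof.
by case/SadjP => E; have [] := adist_lipschitz (ltn_ord c) (ltn_ord _) (ltn_ord _) E.
Qed.

Lemma adistS_desc (x : Svert n) : 0 < adistS c x ->
  exists y, Sadj x y /\ adistS c y = (adistS c x).-1.
Proof.
case: x => l i; rewrite /adistS /adist /=.
have ltin := ltn_ord i; have ltcn := ltn_ord c.
case: l => [[|[|[|[|l]]]] ltl4] //= d_gt0.
- have [dE|dE] := cdist_desc ltin ltcn d_gt0.
    exists (ord0, Ordinal (csucc_lt ltin)); split; last by rewrite /= dE.
    by apply: Sedge_adj; [right; rewrite eq_sym csucc_neq | rewrite /Sedge /= !eqxx].
  exists (ord0, Ordinal (cpred_lt ltin)); split; last by rewrite /= dE.
  apply: Sedge_adj; first by right; rewrite eq_sym cpred_neq.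
  by rewrite /Sedge /= cpredK // !eqxx orbT.
- have [dmin|dmin] := leqP (cdist n c i) (cdist n c (csucc n i)).
    exists (ord0, i); split; last by rewrite /=; lia.
    by apply: Sedge_adj; [left | rewrite /Sedge /= !eqxx ?orbT].
  exists (ord0, Ordinal (csucc_lt ltin)); split; last by rewrite /=; lia.
  by apply: Sedge_adj; [left | rewrite /Sedge /= !eqxx ?orbT].
- exists (@Ordinal 4 1 isT, i); split; last by rewrite /=; lia.
  by apply: Sedge_adj; [left | rewrite /Sedge /= !eqxx ?orbT].
- exists (@Ordinal 4 2 isT, i); split; last by rewrite /=; lia.
  by apply: Sedge_adj; [left | rewrite /Sedge /= !eqxx ?orbT].
Qed.

Lemma adistS_lt_card (x : Svert n) : adistS c x < #|{: 'I_4 * 'I_n}|.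
Proof.
case: x => l i; rewrite card_prod !card_ord /adistS /adist /=.
have := cdistP (ltn_ord i) (ltn_ord c); have := cdistP (csucc_lt (ltn_ord i)) (ltn_ord c).
by have := ltn_ord l; case: eqP; lia.
Qed.

Lemma gdist_vA (x : Svert n) : gdist (@Sadj n) x (vA c) = adistS c x.
Proof.
apply: gdist_potential; [exact: adistS_eq0 | exact: adistS_lipschitz |
  exact: adistS_desc | exact: adistS_lt_card].
Qed.

End DistanceFromA.

Lemma cdist0P k i : i < 2 * k + 1 ->
  (i <= k /\ cdist (2 * k + 1) 0 i = i) \/ (k < i /\ cdist (2 * k + 1) 0 i + i = 2 * k + 1).
Proof. by move=> ltin; have [] := cdistP ltin (_ : 0 < 2 * k + 1); lia. Qed.

Lemma cdist_midP k i : i < 2 * k + 1 ->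
  (i <= k /\ cdist (2 * k + 1) k i + i = k) \/ (k <= i /\ i = k + cdist (2 * k + 1) k i).
Proof. by move=> ltin; have [] := cdistP ltin (_ : k < 2 * k + 1); lia. Qed.

Lemma Sedge_resolved k l i l' j : 2 <= k -> i < 2 * k + 1 -> j < 2 * k + 1 ->
  Sedge (2 * k + 1) l i l' j ->
  (adist (2 * k + 1) 0 l i != adist (2 * k + 1) 0 l' j)
  || (adist (2 * k + 1) k l i != adist (2 * k + 1) k l' j).
Proof.
move=> le2k ltin ltjn E; rewrite -negb_and; apply/negP => /andP[/eqP E0 /eqP Ek].
have ltsi := csucc_lt ltin; have ltsj := csucc_lt ltjn; have ltssi := csucc_lt ltsi.
move: E E0 Ek; rewrite /Sedge /adist.
case/orP => [/orP[] | ] => [/andP[/eqP-> /eqP->] | /andP[/andP[/eqP-> /eqP->] /eqP->] |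
  /andP[/eqP-> /eqP->]].
- have := csuccP ltin; have := csuccP ltsi.
  have := cdist0P ltin; have := cdist0P ltsi; have := cdist0P ltssi.
  have := cdist_midP ltin; have := cdist_midP ltsi; have := cdist_midP ltssi.
  by case: eqP; lia.
- have := csuccP ltjn.
  have := cdist0P ltjn; have := cdist0P ltsj; have := cdist_midP ltjn; have := cdist_midP ltsj.
  by rewrite /=; lia.
- have := csuccP ltjn.
  have := cdist0P ltjn; have := cdist0P ltsj; have := cdist_midP ltjn; have := cdist_midP ltsj.
  by rewrite /=; case: eqP => _; lia.
Qed.

Lemma Sadj_resolved k (u v : Svert (2 * k + 1)) : 2 <= k -> Sadj u v ->
  (adistS 0 u != adistS 0 v) || (adistS k u != adistS k v).
Proof.
move=> le2k /SadjP[] E; first exact: Sedge_resolved (ltn_ord _) (ltn_ord _) E.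
by rewrite ![adistS _ u == _]eq_sym; exact: Sedge_resolved (ltn_ord _) (ltn_ord _) E.
Qed.

Unset Implicit Arguments.

Theorem lemma3p5 (k : nat) (hk : 2 <= k)
    (i1 ik : 'I_(2 * k + 1)) (h1 : nat_of_ord i1 = 0) (hk1 : nat_of_ord ik = k) :
  local_resolving (@Sadj (2 * k + 1)) [set vA i1; vA ik].
Proof.
have lt1n : 1 < 2 * k + 1 by lia.
move=> u v /(Sadj_resolved hk) /orP[sep0 | sepk].
  exists (vA i1); first by rewrite !inE eqxx.
  by rewrite /resolves !gdist_vA // h1.
exists (vA ik); first by rewrite !inE eqxx orbT.
by rewrite /resolves !gdist_vA // hk1.
Qed.
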